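(* For a large scale group $G$ the following are equivalent: (1) the large scale structure of $G$ is induced by a metric; (2) the bornology of $G$ has a countable basis; (3) there is a left-invariant metric $d$ on $G$ inducing the large scale structure of $G$.
   Context: A bornology on a set is a cover closed under subsets and finite unions; a basis of a bornology $\mathcal B$ is a subfamily such that every member of $\mathcal B$ is contained in a member of the subfamily. A large scale group is a group $G$ with a bornology $\mathcal B$ closed under inverses and products; its uniformly bounded covers are those refining $\{gB\}_{g\in G}$ for some $B\in\mathcal B$. A metric $d$ induces the large scale structure whose uniformly bounded covers are those covers refining, for some $r>0$, the family of all sets of $d$-diameter at most $r$. $d$ is left-invariant if $d(gx,gy)=d(x,y)$ for all $g,x,y\in G$. *)

From mathcomp Require Import all_boot.
From mathcomp Require Import boolp classical_sets cardinality.
From Stdlib Require Import Reals.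

Set Implicit Arguments.
Unset Strict Implicit.
Unset Printing Implicit Defensive.

Local Open Scope classical_set_scope.

Record Grp := MkGrp {
  gcar :> Type;
  gmul : gcar -> gcar -> gcar;
  ginv : gcar -> gcar;
  gone : gcar;
  gmulA : forall x y z, gmul x (gmul y z) = gmul (gmul x y) z;
  gmul1l : forall x, gmul gone x = x;
  gmulVl : forall x, gmul (ginv x) x = gone
}.

Definition is_cover (T : Type) (U : set (set T)) : Prop :=
  forall x : T, exists A, U A /\ A x.

Definition refines (T : Type) (U V : set (set T)) : Prop :=
  forall A, U A -> exists A', V A' /\ A `<=` A'.

Definition is_bornology (T : Type) (B : set (set T)) : Prop :=
  [/\ is_cover B,
      (forall A A', B A -> A' `<=` A -> B A') &
      (forall A A', B A -> B A' -> B (A `|` A'))].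

Definition is_basis (T : Type) (B C : set (set T)) : Prop :=
  C `<=` B /\ forall A, B A -> exists A', C A' /\ A `<=` A'.

Definition set_inv (G : Grp) (A : set G) : set G :=
  [set z | exists a, A a /\ z = ginv a].

Definition set_mul (G : Grp) (A A' : set G) : set G :=
  [set z | exists a b, [/\ A a, A' b & z = gmul a b]].

Definition lcoset (G : Grp) (g : G) (A : set G) : set G :=
  [set z | exists a, A a /\ z = gmul g a].

Definition large_scale_group (G : Grp) (B : set (set G)) : Prop :=
  [/\ is_bornology B,
      (forall A, B A -> B (set_inv A)) &
      (forall A A', B A -> B A' -> B (set_mul A A'))].

Definition group_ub (G : Grp) (B : set (set G)) (U : set (set G)) : Prop :=
  is_cover U /\
  exists A, B A /\ refines U [set S | exists g : G, S = lcoset g A].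

Definition is_metric (T : Type) (d : T -> T -> R) : Prop :=
  [/\ forall x y, (0 <= d x y)%R,
      forall x y, d x y = 0%R <-> x = y,
      forall x y, d x y = d y x &
      forall x y z, (d x z <= d x y + d y z)%R].

Definition diam_le (T : Type) (d : T -> T -> R) (r : R) : set (set T) :=
  [set S | forall x y, S x -> S y -> (d x y <= r)%R].

Definition metric_ub (T : Type) (d : T -> T -> R) (U : set (set T)) : Prop :=
  is_cover U /\ exists r : R, (0 < r)%R /\ refines U (diam_le d r).

Definition induces_ls (G : Grp) (B : set (set G)) (d : G -> G -> R) : Prop :=
  forall U : set (set G), group_ub B U <-> metric_ub d U.

Definition left_invariant (G : Grp) (d : G -> G -> R) : Prop :=
  forall g x y : G, d (gmul g x) (gmul g y) = d x y.

From mathcomp Require Import all_boot.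
From mathcomp Require Import boolp classical_sets cardinality.
From Stdlib Require Import Reals Lra.
From mathcomp Require Import zify.

(* The pivot is a description of bounded sets: a metric d induces the large
   scale structure of (G, B) only if the bounded sets are exactly the sets of
   finite d-diameter, and for a LEFT-INVARIANT metric this is also sufficient.
   - (1) => (2): the closed d-balls of integer radius around the unit have
     finite diameter, hence are bounded, and every bounded set (together with
     the unit) has finite diameter, hence lies in one of them.
   - (2) => (3): enumerating a countable basis yields an increasing sequence
     K_0 <= K_1 <= ... of symmetric bounded sets absorbing every bounded set.
     Giving letters of K_m the weight m+1, the weighted word length |.| is
     subadditive and inversion invariant, so d(x,y) = |x^-1 y| is a
     left-invariant metric; its bounded sets are the bounded sets of B,
     because K_m has diameter at most 2(m+1) and the balls {|g| <= k} are
     finite products of the bounded sets K_m.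
   - (3) => (1) is immediate. *)

Set Implicit Arguments.
Unset Strict Implicit.
Unset Printing Implicit Defensive.
Local Open Scope classical_set_scope.

Section GroupFacts.
Variable G : Grp.
Implicit Types x y : G.

Lemma gmulV x : gmul x (ginv x) = gone G.
Proof.
set y := ginv x.
rewrite -[gmul x y]gmul1l -(gmulVl y) -gmulA [gmul y (gmul x y)]gmulA.
by rewrite /y gmulVl gmul1l.
Qed.

Lemma gmul1r x : gmul x (gone G) = x.
Proof. by rewrite -(gmulVl x) gmulA gmulV gmul1l. Qed.

Lemma ginv_uniq x y : gmul x y = gone G -> x = ginv y.
Proof. by move=> xy1; rewrite -[x]gmul1r -(gmulV y) gmulA xy1 gmul1l. Qed.

Lemma ginvK x : ginv (ginv x) = x.
Proof. by symmetry; apply: ginv_uniq; rewrite gmulV. Qed.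

Lemma ginvM x y : ginv (gmul x y) = gmul (ginv y) (ginv x).
Proof.
symmetry; apply: ginv_uniq.
by rewrite -gmulA [gmul (ginv x) _]gmulA gmulVl gmul1l gmulVl.
Qed.

Lemma gmulKV x y : gmul (ginv x) (gmul x y) = y.
Proof. by rewrite gmulA gmulVl gmul1l. Qed.

Lemma gmulVK x y : gmul x (gmul (ginv x) y) = y.
Proof. by rewrite gmulA gmulV gmul1l. Qed.

End GroupFacts.

Lemma nat_upper_bound (r : R) : exists n : nat, (r <= INR n)%R.
Proof. by have [n Hn] := INR_archimed 1 r Rlt_0_1; exists n; lra. Qed.

(* The cover of T by the set S together with all singletons; it witnesses
   that S is bounded in either kind of large scale structure. *)
Definition cover_with (T : Type) (S : set T) : set (set T) :=
  [set S' | S' = S \/ exists x, S' = [set x]].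

Lemma cover_with_cover (T : Type) (S : set T) : is_cover (cover_with S).
Proof. by move=> x; exists [set x]; split=> //; right; exists x. Qed.

Section LargeScaleGroup.
Variables (G : Grp) (B : set (set G)).
Hypothesis LB : large_scale_group B.

Lemma bounded_sub A A' : B A -> A' `<=` A -> B A'.
Proof. by case: LB => -[_ Bsub _] _ _; apply: Bsub. Qed.

Lemma bounded_union A A' : B A -> B A' -> B (A `|` A').
Proof. by case: LB => -[_ _ Bunion] _ _; apply: Bunion. Qed.

Lemma bounded_mul A A' : B A -> B A' -> B (set_mul A A').
Proof. by case: LB => _ _ Bmul; apply: Bmul. Qed.

Lemma bounded_inv A : B A -> B (set_inv A).
Proof. by case: LB => _ Binv _; apply: Binv. Qed.

Lemma bounded_set1 x : B [set x].
Proof.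
case: LB => -[Bcover _ _] _ _; have [A [BA Ax]] := Bcover x.
by apply: bounded_sub BA _ => y ->.
Qed.

Lemma bounded_coset g A : B A -> B (lcoset g A).
Proof.
move=> BA; apply: bounded_sub (bounded_mul (bounded_set1 g) BA) _.
by move=> z [a [Aa ->]]; exists g, a.
Qed.

Lemma group_ub_bounded U S : group_ub B U -> U S -> B S.
Proof.
move=> [_ [A [BA Uref]]] US; have [_ [[g ->] SgA]] := Uref S US.
exact: bounded_sub (bounded_coset g BA) SgA.
Qed.

Lemma cover_with_group_ub A : B A -> group_ub B (cover_with A).
Proof.
move=> BA; split; first exact: cover_with_cover.
exists (A `|` [set gone G]); split; first exact: bounded_union BA (bounded_set1 _).
move=> S [->|[x ->]].
- exists (lcoset (gone G) (A `|` [set gone G])); split; first by exists (gone G).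
  by move=> z Az; exists z; rewrite gmul1l; split=> //; left.
- exists (lcoset x (A `|` [set gone G])); split; first by exists x.
  by move=> z ->; exists (gone G); rewrite gmul1r; split=> //; right.
Qed.

End LargeScaleGroup.

Definition dbounded (T : Type) (d : T -> T -> R) (S : set T) : Prop :=
  exists r : R, diam_le d r S.

Definition cball (T : Type) (d : T -> T -> R) (c : T) (r : R) : set T :=
  [set y | (d c y <= r)%R].

Section MetricFacts.
Variables (T : Type) (d : T -> T -> R).
Hypothesis dm : is_metric d.

Lemma cball_diam c r : diam_le d (2 * r) (cball d c r).
Proof.
case: dm => _ _ dsym dtri x y cx cy.
by have := dtri x c y; rewrite (dsym x c); rewrite /cball /= in cx cy; lra.
Qed.

Lemma cover_with_metric_ub S r : diam_le d r S -> metric_ub d (cover_with S).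
Proof.
case: dm => d0 deq _ _ Sr; split; first exact: cover_with_cover.
exists (Rmax r 1); split; first by have := Rmax_r r 1; lra.
move=> _ [->|[x ->]].
- exists S; split=> // x y Sx Sy.
  by have := Sr x y Sx Sy; have := Rmax_l r 1; lra.
- exists [set x]; split=> // y z -> ->.
  by rewrite (proj2 (deq x x) erefl); have := Rmax_r r 1; lra.
Qed.

End MetricFacts.

Lemma metric_ub_dbounded (T : Type) (d : T -> T -> R) U S :
  metric_ub d U -> U S -> dbounded d S.
Proof.
move=> [_ [r [_ Uref]]] US; have [S' [S'r SS']] := Uref S US.
by exists r => x y Sx Sy; apply: S'r; [apply: SS' | apply: SS'].
Qed.

Lemma bounded_iff_dbounded (G : Grp) (B : set (set G)) (d : G -> G -> R) :
  large_scale_group B -> is_metric d -> induces_ls B d ->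
  forall A, B A <-> dbounded d A.
Proof.
move=> LB dm ind A; split.
- move=> /(cover_with_group_ub LB) /ind Hm; exact: metric_ub_dbounded Hm (or_introl erefl).
- move=> [r Ar]; have /ind Hg := cover_with_metric_ub dm Ar.
  exact: (group_ub_bounded LB Hg (or_introl erefl)).
Qed.

(* Conversely, a left-invariant metric whose sets of finite diameter are the
   bounded sets induces the large scale structure: cosets of a bounded set
   have a common diameter bound, and a set of diameter at most r lies in a
   coset of the (bounded) ball of radius r around the unit. *)
Lemma induces_of_bounded_iff (G : Grp) (B : set (set G)) (d : G -> G -> R) :
  is_metric d -> left_invariant d -> (forall A, B A <-> dbounded d A) ->
  induces_ls B d.
Proof.
move=> dm dinv bd U; split.
- case=> Ucov [A [BA Uref]]; split=> //.
  have [r Ar] := (bd A).1 BA.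
  exists (Rmax r 1); split; first by have := Rmax_r r 1; lra.
  move=> S US; have [_ [[g ->] SgA]] := Uref S US.
  exists (lcoset g A); split=> // _ _ [a [Aa ->]] [b [Ab ->]].
  by rewrite dinv; have := Ar a b Aa Ab; have := Rmax_l r 1; lra.
- case=> Ucov [r [_ Uref]]; split=> //.
  exists (cball d (gone G) r); split.
    by apply/bd; exists (2 * r)%R; apply: cball_diam.
  move=> S US; have [S' [S'r SS']] := Uref S US.
  have [[x Sx]|noS] := pselect (exists x, S x); last first.
    exists (lcoset (gone G) (cball d (gone G) r)); split; first by exists (gone G).
    by move=> y Sy; case: noS; exists y.
  exists (lcoset x (cball d (gone G) r)); split; first by exists x.
  move=> y Sy; exists (gmul (ginv x) y); split; last by rewrite gmulVK.
  rewrite /cball /= -(gmulVl x) dinv.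
  by apply: S'r; apply: SS'.
Qed.

Lemma metric_countable_basis (G : Grp) (B : set (set G)) (d : G -> G -> R) :
  large_scale_group B -> is_metric d -> induces_ls B d ->
  exists C : set (set G), is_basis B C /\ countable C.
Proof.
move=> LB dm ind; have bd := bounded_iff_dbounded LB dm ind.
pose ball (n : nat) := cball d (gone G) (INR n).
exists (range ball); split; last exact: card_image_le.
split; first by move=> _ [n _ <-]; apply/bd; exists (2 * INR n)%R; apply: cball_diam.
move=> A BA; have /bd [r Ar] := bounded_union LB BA (bounded_set1 LB (gone G)).
have [n rn] := nat_upper_bound r.
exists (ball n); split; first by exists n.
by move=> a Aa; have := Ar (gone G) a (or_intror erefl) (or_introl Aa); rewrite /ball /cball /=; lra.
Qed.

Definition symmetric_exhaustion (G : Grp) (B : set (set G)) (K : nat -> set G) :=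
  [/\ forall m, B (K m),
      forall m m', m <= m' -> K m `<=` K m',
      forall m x, K m x -> K m (ginv x) &
      forall A, B A -> exists m, A `<=` K m].

Section Exhaustion.
Variables (G : Grp) (B : set (set G)).
Hypothesis LB : large_scale_group B.

Lemma countable_basis_enum C : is_basis B C -> countable C ->
  exists f : nat -> set G, (forall n, B (f n)) /\ forall A, B A -> exists n, A `<=` f n.
Proof.
move=> [CB Cbasis] /pcard_surjP [g gsurj].
pose f n := if `[< B (g n) >] then g n else [set gone G].
have fB n : B (f n).
  by rewrite /f; case: asboolP => // _; apply: bounded_set1.
exists f; split=> // A BA; have [A' [CA' AA']] := Cbasis A BA.
have [n _ gnA'] := gsurj A' CA'; exists n.
have Bgn : B (g n) by rewrite gnA'; apply: CB.
by rewrite /f asboolT // gnA'.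
Qed.

Definition sym_partial_union (f : nat -> set G) (n : nat) : set G :=
  [set x | exists2 i, i <= n & f i x \/ f i (ginv x)].

Lemma sym_partial_union_exhaustion f :
  (forall n, B (f n)) -> (forall A, B A -> exists n, A `<=` f n) ->
  symmetric_exhaustion B (sym_partial_union f).
Proof.
move=> fB fabs.
have symB i : B (f i `|` set_inv (f i)).
  exact: (bounded_union LB (fB i) (bounded_inv LB (fB i))).
have in_sym i x : f i x \/ f i (ginv x) -> (f i `|` set_inv (f i)) x.
  by case=> [fx|fxV]; [left | right; exists (ginv x); rewrite ginvK].
split.
- elim=> [|n IH].
    apply: (bounded_sub LB (symB 0)) => x [i i0 fx].
    have ei : i = 0 by lia.
    by rewrite ei in fx; apply: in_sym.
  apply: (bounded_sub LB (bounded_union LB IH (symB n.+1))) => x [i ile fx].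
  have [ilen|] := leqP i n; first by left; exists i.
  move=> ngti; have ei : i = n.+1 by lia.
  by right; rewrite -ei; apply: in_sym.
- by move=> m m' mm' x [i im fx]; exists i => //; lia.
- by move=> m x [i im [fx|fxV]]; exists i => //; [right; rewrite ginvK | left].
- by move=> A /fabs [n An]; exists n => x /An fx; exists n => //; left.
Qed.

Lemma countable_basis_exhaustion C : is_basis B C -> countable C ->
  exists K : nat -> set G, symmetric_exhaustion B K.
Proof.
move=> Cbasis Ccount; have [f [fB fabs]] := countable_basis_enum Cbasis Ccount.
by exists (sym_partial_union f); apply: sym_partial_union_exhaustion.
Qed.

Lemma exhaustion_cover K : symmetric_exhaustion B K -> forall g, exists m, K m g.
Proof. by case=> _ _ _ Kabs g; have [m gK] := Kabs _ (bounded_set1 LB g); exists m; apply: gK. Qed.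

End Exhaustion.

Section WordLength.
Variables (G : Grp) (K : nat -> set G).

Inductive spelled : nat -> G -> Prop :=
| spelled_nil : spelled 0 (gone G)
| spelled_cons n m s g : K m s -> spelled n g -> spelled (n + m.+1) (gmul s g).

Lemma spelled_mul n m g h : spelled n g -> spelled m h -> spelled (n + m) (gmul g h).
Proof.
move=> sg sh; elim: sg => [|n' m' s g' Ks _ IH]; first by rewrite gmul1l.
have -> : n' + m'.+1 + m = (n' + m) + m'.+1 by lia.
by rewrite -gmulA; apply: spelled_cons.
Qed.

Lemma spelled_letter m s : K m s -> spelled m.+1 s.
Proof. by move=> Ks; rewrite -[s]gmul1r -[m.+1]add0n; apply: spelled_cons spelled_nil. Qed.

Lemma spelled0 n g : spelled n g -> n = 0 -> g = gone G.
Proof. by case=> // n' m s g' _ _; lia. Qed.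

Definition spelled_within (k : nat) : set G := [set g | exists2 j, j <= k & spelled j g].

Lemma spelled_within_succ k : (forall m m', m <= m' -> K m `<=` K m') ->
  spelled_within k.+1 `<=` spelled_within k `|` set_mul (K k) (spelled_within k).
Proof.
move=> Kmono g [j jle sj].
have [jlek|kltj] := leqP j k; first by left; exists j.
have ej : j = k.+1 by lia.
case: sj ej jle kltj => [|n m s g' Ks sg'] ej _ _; first by lia.
right; exists s, g'; split=> //; first by apply: (Kmono m) => //; lia.
by exists n => //; lia.
Qed.

Hypothesis Kcover : forall g, exists m, K m g.

Lemma spellable g : exists n, `[< spelled n g >].
Proof. by have [m Km] := Kcover g; exists m.+1; apply/asboolP/spelled_letter. Qed.

Definition wlen (g : G) : nat := ex_minn (spellable g).

Lemma wlen_spelled g : spelled (wlen g) g.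
Proof. by rewrite /wlen; case: ex_minnP => n /asboolP. Qed.

Lemma wlen_min g n : spelled n g -> wlen g <= n.
Proof. by move=> sg; rewrite /wlen; case: ex_minnP => k _; apply; apply/asboolP. Qed.

Lemma wlen_eq0 g : wlen g = 0 <-> g = gone G.
Proof.
split; first exact: spelled0 (wlen_spelled g).
by move=> ->; have := wlen_min spelled_nil; lia.
Qed.

Lemma wlenM g h : wlen (gmul g h) <= wlen g + wlen h.
Proof. exact/wlen_min/spelled_mul/wlen_spelled/wlen_spelled. Qed.

Lemma wlen_letter m s : K m s -> wlen s <= m.+1.
Proof. by move=> /spelled_letter /wlen_min. Qed.

Hypothesis Ksym : forall m x, K m x -> K m (ginv x).

Lemma spelled_inv n g : spelled n g -> spelled n (ginv g).
Proof.
elim=> [|n' m s g' Ks _ IH].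
  by rewrite -[ginv _]gmul1r gmulVl; apply: spelled_nil.
by rewrite ginvM; apply: spelled_mul IH _; apply/spelled_letter/Ksym.
Qed.

Lemma wlenV g : wlen (ginv g) = wlen g.
Proof.
have le x : wlen (ginv x) <= wlen x by apply/wlen_min/spelled_inv/wlen_spelled.
by have := le g; have := le (ginv g); rewrite ginvK; lia.
Qed.

Definition word_dist (x y : G) : R := INR (wlen (gmul (ginv x) y)).

Lemma word_dist_metric : is_metric word_dist.
Proof.
split.
- by move=> x y; apply: pos_INR.
- move=> x y; split.
    move=> d0; have /wlen_eq0 e1 : wlen (gmul (ginv x) y) = 0 by apply: INR_eq.
    by rewrite -[y](gmulVK x) e1 gmul1r.
  by move=> ->; rewrite /word_dist gmulVl (proj2 (wlen_eq0 _) erefl).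
- by move=> x y; rewrite /word_dist -wlenV ginvM ginvK.
- move=> x y z; rewrite /word_dist -plus_INR; apply/le_INR/leP.
  have -> : gmul (ginv x) z = gmul (gmul (ginv x) y) (gmul (ginv y) z).
    by rewrite -gmulA gmulVK.
  exact: wlenM.
Qed.

Lemma word_dist_left_invariant : left_invariant word_dist.
Proof. by move=> g x y; rewrite /word_dist ginvM -gmulA gmulKV. Qed.

End WordLength.

Section WordMetric.
Variables (G : Grp) (B : set (set G)) (K : nat -> set G).
Hypotheses (LB : large_scale_group B) (HK : symmetric_exhaustion B K).

Lemma spelled_within_bounded k : B (spelled_within K k).
Proof.
case: HK => KB Kmono _ _; elim: k => [|k IH].
  by apply: (bounded_sub LB (bounded_set1 LB (gone G))) => g [j j0 sj]; apply: spelled0 sj _; lia.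
apply: (bounded_sub LB (bounded_union LB IH (bounded_mul LB (KB k) IH))).
exact: spelled_within_succ.
Qed.

(* For the word metric of a symmetric exhaustion, bounded means finite
   diameter: K_m has diameter at most 2(m+1), and a set of diameter at most
   n lies in a coset of the bounded set of elements of weight at most n. *)
Lemma word_dist_bounded_iff (Kcover : forall g, exists m, K m g) :
  forall A, B A <-> dbounded (word_dist Kcover) A.
Proof.
case: HK => _ _ Ksym Kabs A; split.
- move=> /Kabs [m AK]; exists (INR (m.+1 + m.+1)) => a b Aa Ab.
  apply/le_INR/leP; apply: leq_trans (wlenM _ _ _) _; rewrite wlenV //.
  by have := wlen_letter Kcover (AK a Aa); have := wlen_letter Kcover (AK b Ab); lia.
- move=> [r Ar]; have [n rn] := nat_upper_bound r.
  have [[a Aa]|noA] := pselect (exists a, A a); last first.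
    by apply: (bounded_sub LB (bounded_set1 LB (gone G))) => a Aa; case: noA; exists a.
  apply: (bounded_sub LB (bounded_coset LB a (spelled_within_bounded n))) => y Ay.
  exists (gmul (ginv a) y); split; last by rewrite gmulVK.
  exists (wlen Kcover (gmul (ginv a) y)); last exact: wlen_spelled.
  by apply/leP/INR_le; have := Ar a y Aa Ay; rewrite /word_dist; lra.
Qed.

End WordMetric.

Lemma countable_basis_left_invariant_metric (G : Grp) (B : set (set G)) :
  large_scale_group B -> (exists C : set (set G), is_basis B C /\ countable C) ->
  exists d : G -> G -> R, [/\ is_metric d, left_invariant d & induces_ls B d].
Proof.
move=> LB [C [Cbasis Ccount]].
have [K HK] := countable_basis_exhaustion LB Cbasis Ccount.
have Kcover := exhaustion_cover LB HK; have [_ _ Ksym _] := HK.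
exists (word_dist Kcover); split.
- exact: word_dist_metric.
- exact: word_dist_left_invariant.
- apply: induces_of_bounded_iff; first exact: word_dist_metric.
    exact: word_dist_left_invariant.
  exact: word_dist_bounded_iff.
Qed.

Theorem proposition7p1 (G : Grp) (B : set (set G)) :
  large_scale_group B ->
  ((exists d : G -> G -> R, is_metric d /\ induces_ls B d) <->
   (exists C : set (set G), is_basis B C /\ countable C)) /\
  ((exists C : set (set G), is_basis B C /\ countable C) <->
   (exists d : G -> G -> R, [/\ is_metric d, left_invariant d & induces_ls B d])).
Proof.
move=> LB; split; split.
- by move=> [d [dm dind]]; apply: metric_countable_basis LB dm dind.
- by move=> /(countable_basis_left_invariant_metric LB) [d [dm _ dind]]; exists d.
- exact: countable_basis_left_invariant_metric.
- by move=> [d [dm _ dind]]; apply: metric_countable_basis LB dm dind.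
Qed.
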